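(* Let $3\leq m\leq n$, $\ell=m-1$. Then $\mathfrak{A}\cap\mathfrak{S}=\varnothing$.
   Context: For $Y=(Y_1;\ldots;Y_\ell)\in\mathbb{R}^{n\times n\times\ell}$ and $\mathbf{a}=(a_1,\ldots,a_\ell,a_m)^\top\in\mathbb{R}^m$, $M(\mathbf{a},Y)=\sum_{k=1}^\ell a_kY_k-a_mE_n$. $\mathfrak{A}=\{Y\mid \det M(\mathbf{a},Y)>0\text{ for all }\mathbf{a}\neq\mathbf{0}\}$, equivalently the set of $Y$ such that $(Y_1;\ldots;Y_\ell;E_n)$ is absolutely nonsingular (i.e. $\det(\sum_k x_kT_k)=0$ only for $x=\mathbf 0$). $V(Y)=\{\mathbf{a}\in\mathbb{R}^n\mid \sum_{k=1}^\ell x_kY_k\mathbf{a}=x_m\mathbf{a}\text{ for some }(x_1,\ldots,x_m)^\top\neq\mathbf{0}\}$, $\hat V(Y)$ its linear span, and $\mathfrak{S}=\{Y\mid\dim\hat V(Y)=n\}$. *)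

From HB Require Import structures.
From mathcomp Require Import all_boot all_order all_algebra.
Set Implicit Arguments. Unset Strict Implicit. Unset Printing Implicit Defensive.
Import Order.TTheory GRing.Theory Num.Theory.
Local Open Scope ring_scope.

(* A tensor Y = (Y_1; ...; Y_l) in R^{n x n x l} is a family of l square
   matrices.  Vectors a in R^m, m = l+1, are column vectors 'cV_(l.+1);
   a_k (k < l) is the entry widen_ord k, a_m is the last entry ord_max. *)

Definition lastc (R : pzRingType) (l : nat) (a : 'cV[R]_(l.+1)) : R := a ord_max 0.
Definition coefc (R : pzRingType) (l : nat) (a : 'cV[R]_(l.+1)) (k : 'I_l) : R :=
  a (widen_ord (leqnSn l) k) 0.

Definition Mmat (R : pzRingType) (n l : nat) (a : 'cV[R]_(l.+1))
  (Y : 'I_l -> 'M[R]_n) : 'M[R]_n :=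
  \sum_(k < l) coefc a k *: Y k - lastc a *: 1%:M.

Definition in_frakA (R : numDomainType) (n l : nat) (Y : 'I_l -> 'M[R]_n) : Prop :=
  forall a : 'cV[R]_(l.+1), a != 0 -> 0 < \det (Mmat a Y).

Definition in_V (R : pzRingType) (n l : nat) (Y : 'I_l -> 'M[R]_n)
  (v : 'cV[R]_n) : Prop :=
  exists x : 'cV[R]_(l.+1), x != 0 /\
    (\sum_(k < l) coefc x k *: Y k) *m v = lastc x *: v.

(* The set frak S: dim span V(Y) = n, i.e. V(Y) contains n vectors whose
   span (the column space of the matrix they form) has dimension n. *)
Definition in_frakS (R : fieldType) (n l : nat) (Y : 'I_l -> 'M[R]_n) : Prop :=
  exists B : 'M[R]_n, (forall j : 'I_n, in_V Y (col j B)) /\ \rank B = n.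

(* If Y lies in frak A, then M(x, Y) is nonsingular for every x <> 0, and a
   vector v of V(Y) is by definition killed by M(x, Y) for some x <> 0; hence
   V(Y) = {0}.  Its span is then 0-dimensional, which is impossible for
   n >= m >= 3. *)
From HB Require Import structures.
From mathcomp Require Import all_boot all_order all_algebra.
Import Order.TTheory GRing.Theory Num.Theory.
Local Open Scope ring_scope.

Lemma det_neq0_mulmx_eq0 {R : idomainType} {n : nat} (A : 'M[R]_n)
  (v : 'cV[R]_n) : \det A != 0 -> A *m v = 0 -> v = 0.
Proof.
move=> detA_neq0 Av0; apply/eqP.
have : \det A *: v == 0 by rewrite -mul_scalar_mx -mul_adj_mx -mulmxA Av0 mulmx0.
by rewrite scalemx_eq0 (negPf detA_neq0).
Qed.

Lemma Mmat_mulmx_eq0 {R : pzRingType} {n l : nat} {Y : 'I_l -> 'M[R]_n}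
  {x : 'cV[R]_l.+1} {v : 'cV[R]_n} :
  (\sum_(k < l) coefc x k *: Y k) *m v = lastc x *: v -> Mmat x Y *m v = 0.
Proof. by move=> hv; rewrite /Mmat mulmxBl hv -scalemxAl mul1mx subrr. Qed.

Lemma frakA_in_V_eq0 {R : numDomainType} {n l : nat} {Y : 'I_l -> 'M[R]_n}
  {v : 'cV[R]_n} : in_frakA Y -> in_V Y v -> v = 0.
Proof.
move=> hA [x [x_neq0 hv]].
apply: (det_neq0_mulmx_eq0 (Mmat x Y)); last exact: Mmat_mulmx_eq0.
by rewrite gt_eqF // hA.
Qed.

Lemma frakA_frakS_dim0 {R : numFieldType} {n l : nat} {Y : 'I_l -> 'M[R]_n} :
  in_frakA Y -> in_frakS Y -> n = 0%N.
Proof.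
move=> hA [B [hV rankB]].
have B0 : B = 0.
  apply/matrixP => i j.
  by have /matrixP/(_ i 0) := frakA_in_V_eq0 hA (hV j); rewrite !mxE.
by rewrite -rankB B0 mxrank0.
Qed.

Theorem mainTheorem9 (R : rcfType) (n l : nat) (hm : (3 <= l.+1)%N)
  (hmn : (l.+1 <= n)%N) (Y : 'I_l -> 'M[R]_n) :
  ~ (in_frakA Y /\ in_frakS Y).
Proof.
move=> [hA hS].
have n0 := frakA_frakS_dim0 hA hS.
by move: (leq_trans hm hmn); rewrite n0.
Qed.
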